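(* Let $S:\mathbb{R}^d\to\mathbb{R}$ be real analytic in a neighborhood of the origin, and let $\beta^1,\dots,\beta^k\in\mathbb{N}^d$. There is a constant $C$ such that for all $x$ sufficiently close to the origin with all coordinates nonzero and all $1\le i\le k$, $$|\partial^{\beta^i}S(x)|\le C\sup_{\alpha\in\mathcal{N}(S)}|x^{\alpha-\beta^i}|,$$ where $|x^{\gamma}|=\prod_j|x_j|^{\gamma_j}$.
   Context: $\mathbb{N}=\{0,1,2,\dots\}$, $\partial^\beta=\partial_1^{\beta_1}\cdots\partial_d^{\beta_d}$. Writing $S(x)=\sum_{\alpha}c_\alpha x^\alpha$ near the origin, $\mathcal{N}(S)$ is the convex hull of $\bigcup_{c_\alpha\ne0}(\alpha+[0,\infty)^d)$. *)

From HB Require Import structures.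
From mathcomp Require Import all_boot all_order all_algebra.
From mathcomp Require Import all_classical all_reals all_analysis.
Set Implicit Arguments. Unset Strict Implicit. Unset Printing Implicit Defensive.
Import Order.TTheory GRing.Theory Num.Theory.
Import numFieldNormedType.Exports.
Local Open Scope classical_set_scope.
Local Open Scope ring_scope.

Definition monom {R : realType} {d : nat} (alpha : 'I_d -> nat) (x : 'rV[R]_d) : R :=
  \prod_(j < d) (x 0 j) ^+ (alpha j).

(* box partial sum of the power series sum_alpha c_alpha x^alpha over alpha_j < N *)
Definition box_sum {R : realType} {d : nat} (c : ('I_d -> nat) -> R)
  (x : 'rV[R]_d) (N : nat) : R :=
  \sum_(a : {ffun 'I_d -> 'I_N}) c (fun j => (a j : nat)) * monom (fun j => (a j : nat)) x.

Definition box_abs_sum {R : realType} {d : nat} (c : ('I_d -> nat) -> R)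
  (x : 'rV[R]_d) (N : nat) : R :=
  \sum_(a : {ffun 'I_d -> 'I_N}) `|c (fun j => (a j : nat)) * monom (fun j => (a j : nat)) x|.

(* S(x) = sum_alpha c_alpha x^alpha (absolutely convergent) for all x in the
   polydisc of radius r around the origin: S is real analytic near 0 with
   Taylor coefficients c. *)
Definition power_series_rep {R : realType} {d : nat} (S : 'rV[R]_d -> R)
  (c : ('I_d -> nat) -> R) (r : R) : Prop :=
  0 < r /\
  forall x : 'rV[R]_d, `|x| < r ->
    (exists M : R, forall N, box_abs_sum c x N <= M) /\
    (box_sum c x @ \oo --> S x).

(* Newton polyhedron: convex hull of the union of alpha + [0,oo)^d, c_alpha <> 0 *)
Definition shifted_orthants {R : realType} {d : nat} (c : ('I_d -> nat) -> R)
  : set ('I_d -> R) :=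
  [set q | exists alpha : 'I_d -> nat, c alpha <> 0 /\ forall j, (alpha j)%:R <= q j].

Definition convex_hull_fun {R : realType} {d : nat} (A : set ('I_d -> R))
  : set ('I_d -> R) :=
  [set p | exists (n : nat) (w : 'I_n -> R) (q : 'I_n -> 'I_d -> R),
     (forall i, 0 <= w i) /\ \sum_(i < n) w i = 1 /\ (forall i, A (q i)) /\
     forall j, p j = \sum_(i < n) w i * q i j].

Definition newton_polyhedron {R : realType} {d : nat} (c : ('I_d -> nat) -> R)
  : set ('I_d -> R) := convex_hull_fun (shifted_orthants c).

Definition abs_monomR {R : realType} {d : nat} (x : 'rV[R]_d) (gamma : 'I_d -> R) : R :=
  \prod_(j < d) (`|x 0 j| `^ gamma j).

Definition unitvec {R : realType} {d : nat} (j : 'I_d) : 'rV[R]_d :=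
  \row_(k < d) (k == j)%:R.

Definition dpartial {R : realType} {d : nat} (j : 'I_d) (f : 'rV[R]_d -> R)
  : 'rV[R]_d -> R := fun x => 'D_(unitvec j) f x.

Definition dmulti {R : realType} {d : nat} (beta : 'I_d -> nat) (f : 'rV[R]_d -> R)
  : 'rV[R]_d -> R :=
  foldr (fun j g => iter (beta j) (dpartial j) g) f (enum 'I_d).

From HB Require Import structures.
From mathcomp Require Import all_boot all_order all_algebra.
From mathcomp Require Import all_classical all_reals all_analysis.
From mathcomp Require Import lra ring.
Import Order.TTheory GRing.Theory Num.Theory.
Import numFieldNormedType.Exports.
Local Open Scope classical_set_scope.
Local Open Scope ring_scope.

(* Differentiating term by term, the derivative [dmulti beta S] is again a
   convergent power series near 0, whose exponents a satisfy c (a + beta) <> 0.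
   By Dickson's lemma the support of c has finitely many minimal elements L t,
   all in the Newton polyhedron, and every a + beta dominates one of them.  On
   the polydisc of radius rho this gives
   |x^a| <= rho^a * rho^(beta - L t) * |x^(L t - beta)|, so summing against the
   absolutely convergent series at (rho, ..., rho) bounds |dmulti beta S x| by a
   constant times sum_t |x^(L t - beta)|, hence by a constant times the supremum
   over the Newton polyhedron. *)

Section BoxSums.
Set Implicit Arguments. Unset Strict Implicit.
Variables (R : realType) (d : nat).
Local Notation mi := ('I_d -> nat).
Implicit Types G : mi -> R.

Definition box_index N (a : {ffun 'I_d -> 'I_N}) : mi := fun j => a j.

Definition boxsum G N : R := \sum_(a : {ffun 'I_d -> 'I_N}) G (box_index a).

Lemma box_sumE (c : mi -> R) x N : box_sum c x N = boxsum (fun a => c a * monom a x) N.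
Proof. by []. Qed.

Lemma box_abs_sumE (c : mi -> R) x N :
  box_abs_sum c x N = boxsum (fun a => `|c a * monom a x|) N.
Proof. by []. Qed.

Lemma sumr_inj_onto (A B : finType) (phi : A -> B) (P : pred B) (F : B -> R) :
  injective phi -> (forall b, reflect (exists a, phi a = b) (P b)) ->
  \sum_a F (phi a) = \sum_(b | P b) F b.
Proof.
move=> phi_inj imP; rewrite -[LHS](big_imset _ (in2W phi_inj)) /=.
apply: eq_bigl => b; apply/imsetP/imP => [[a _ ->]|[a <-]]; by exists a.
Qed.

Lemma boxsum_widen G N M : (N <= M)%N ->
  boxsum G N = \sum_(b : {ffun 'I_d -> 'I_M} | [forall j, (b j < N)%N]) G (box_index b).
Proof.
move=> NM; pose wid (a : {ffun 'I_d -> 'I_N}) := [ffun j => widen_ord NM (a j)].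
have -> : boxsum G N = \sum_a G (box_index (wid a)).
  by apply: eq_bigr => a _; congr G; apply: funext => j; rewrite /box_index ffunE.
apply: sumr_inj_onto => [a b /ffunP eq_ab|b].
  by apply/ffunP => j; apply/val_inj; have := congr1 val (eq_ab j); rewrite !ffunE.
apply: (iffP forallP) => [b_lt|[a <-] j]; last by rewrite ffunE /=.
by exists [ffun j => Ordinal (b_lt j)]; apply/ffunP => j; rewrite !ffunE; apply/val_inj.
Qed.

Lemma boxsum_le G N M : (forall a, 0 <= G a) -> (N <= M)%N -> boxsum G N <= boxsum G M.
Proof.
move=> G_ge0 NM; rewrite (boxsum_widen G NM) [leRHS]/boxsum big_mkcond /=.
by apply: ler_sum => b _; case: ifP.
Qed.

Lemma boxsumB G1 G2 N : boxsum (fun a => G1 a - G2 a) N = boxsum G1 N - boxsum G2 N.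
Proof. by rewrite /boxsum -sumrB. Qed.

Lemma boxsumZ k G N : boxsum (fun a => k * G a) N = k * boxsum G N.
Proof. by rewrite /boxsum mulr_sumr. Qed.

Lemma ler_boxsum G1 G2 N : (forall a, G1 a <= G2 a) -> boxsum G1 N <= boxsum G2 N.
Proof. by move=> le12; apply: ler_sum => a _. Qed.

Lemma ler_norm_boxsum G N : `|boxsum G N| <= boxsum (fun a => `|G a|) N.
Proof. exact: ler_norm_sum. Qed.

Definition incr_mi (j : 'I_d) (a : mi) : mi := fun i => (a i + (i == j))%N.

Lemma incr_mi_id j a : incr_mi j a j = (a j).+1.
Proof. by rewrite /incr_mi eqxx addn1. Qed.

Lemma boxsum_incr j G N :
  \sum_(a : {ffun 'I_d -> 'I_N}) G (incr_mi j (box_index a)) =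
  \sum_(b : {ffun 'I_d -> 'I_N.+1} | [forall i, if i == j then (0 < b i)%N else (b i < N)%N])
    G (box_index b).
Proof.
have lt_incr (a : {ffun 'I_d -> 'I_N}) i : (a i + (i == j) < N.+1)%N.
  by rewrite ltnS; case: (i == j); rewrite ?addn1 ?addn0 // ltnW.
pose sh a := [ffun i => Ordinal (lt_incr a i)].
have -> : \sum_(a : {ffun 'I_d -> 'I_N}) G (incr_mi j (box_index a)) =
          \sum_a G (box_index (sh a)).
  by apply: eq_bigr => a _; congr G; apply: funext => i; rewrite /box_index ffunE.
apply: sumr_inj_onto => [a b /ffunP eq_ab|b].
  apply/ffunP => i; apply/val_inj; have := congr1 val (eq_ab i).
  by rewrite !ffunE /= => /eqP; rewrite eqn_add2r => /eqP.
apply: (iffP forallP) => [b_in|[a <-] i]; last first.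
  by rewrite ffunE /=; case: eqP => _; rewrite ?addn1 ?addn0.
have lt_sub i : (b i - (i == j) < N)%N.
  by move: (b_in i); case: eqP => _ bi; rewrite ?subn0 // subn1 -ltnS prednK // ltn_ord.
exists [ffun i => Ordinal (lt_sub i)]; apply/ffunP => i; apply/val_inj => /=.
by rewrite !ffunE /= ffunE /= subnK //; move: (b_in i); case: eqP.
Qed.

Lemma boxsum_incr_le j G N : (forall a, 0 <= G a) ->
  \sum_(a : {ffun 'I_d -> 'I_N}) G (incr_mi j (box_index a)) <= boxsum G N.+1.
Proof.
by move=> G_ge0; rewrite boxsum_incr /boxsum big_mkcond /=; apply: ler_sum => b _; case: ifP.
Qed.

(* Both sums run over the box of size N.+1; when G vanishes on the face a j = 0
   they can only differ on indices outside the box of size N. *)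
Lemma boxsum_incr_dist j G N : (forall a, a j = 0%N -> G a = 0) ->
  `|\sum_(a : {ffun 'I_d -> 'I_N}) G (incr_mi j (box_index a)) - boxsum G N|
  <= boxsum (fun a => `|G a|) N.+1 - boxsum (fun a => `|G a|) N.
Proof.
move=> G_face; rewrite boxsum_incr !(boxsum_widen _ (leqnSn N)) /boxsum.
rewrite [X in _ <= _ - X]big_mkcond [X in `|X - _|]big_mkcond [X in `|_ - X|]big_mkcond.
rewrite -!sumrB /=; apply: le_trans (ler_norm_sum _ _ _) _; apply: ler_sum => b _.
case inN: [forall i, (b i < N)%N]; last by rewrite !subr0; case: ifP => _; rewrite ?normr0.
rewrite subrr; case: ifP => [_|/negbT/forallPn[i]]; first by rewrite subrr normr0.
case: eqP => [->|_]; last by move/forallP: inN => ->.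
by rewrite -eqn0Ngt => /eqP bj0; rewrite (G_face _ bj0) subrr normr0.
Qed.

End BoxSums.

Section BoxSumCvg.
Set Implicit Arguments. Unset Strict Implicit.
Variables (R : realType) (d : nat).
Local Notation mi := ('I_d -> nat).
Implicit Types G : mi -> R.

Lemma lim_norm_le (u : nat -> R) l B :
  u @ \oo --> l -> (forall n, `|u n| <= B) -> `|l| <= B.
Proof.
move=> ul uB; have nl : (fun n => `|u n|) @ \oo --> `|l| by apply: cvg_norm.
rewrite -(cvg_lim _ nl) //; apply: limr_le; first exact: cvgP nl.
by near=> n; apply: uB.
Unshelve. all: by end_near.
Qed.

Lemma boxsum_ge0_cvg G K : (forall a, 0 <= G a) -> (forall N, boxsum G N <= K) ->
  cvgn (boxsum G).
Proof.
move=> G_ge0 GK; apply: nondecreasing_is_cvgn; last by exists K => _ [N _ <-].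
by move=> N M; apply: boxsum_le.
Qed.

Lemma boxsum_abs_cvg G K : (forall N, boxsum (fun a => `|G a|) N <= K) ->
  cvgn (boxsum G).
Proof.
move=> absK; pose P a := `|G a| + G a.
have P_ge0 a : 0 <= P a by have := ler_norm (- G a); rewrite normrN /P; lra.
have PK N : boxsum P N <= K + K.
  have -> : boxsum P N = boxsum (fun a => `|G a|) N + boxsum G N by rewrite /boxsum -big_split.
  by have := absK N; have := ler_norm_boxsum G N; have := ler_norm (boxsum G N); lra.
have -> : boxsum G = boxsum P \- boxsum (fun a => `|G a|).
  by apply: funext => N; rewrite /= -boxsumB /P; congr boxsum; apply: funext => a; lra.
by apply: is_cvgB; [apply: boxsum_ge0_cvg PK|apply: boxsum_ge0_cvg absK].
Qed.

Lemma boxsum_increment_cvg0 G K : (forall a, 0 <= G a) -> (forall N, boxsum G N <= K) ->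
  (fun N => boxsum G N.+1 - boxsum G N) @ \oo --> 0.
Proof.
move=> G_ge0 GK; have cvG := boxsum_ge0_cvg G_ge0 GK.
by rewrite -(subrr (limn (boxsum G))); apply: cvgB; rewrite ?(cvg_shiftS (boxsum G)).
Qed.

End BoxSumCvg.

Section BinomialRemainder.
Variable R : realFieldType.
Implicit Types u h s : R.

Lemma exprD_ge_linear_term u s n : 0 <= u -> 0 <= s ->
  n.+1%:R * u ^+ n * s <= (u + s) ^+ n.+1.
Proof.
move=> u_ge0 s_ge0; elim: n => [|n IH]; first by rewrite expr0 expr1; lra.
have un_le : u ^+ n.+1 <= (u + s) ^+ n.+1 by apply: lerXn2r; rewrite ?nnegrE; lra.
rewrite (exprS (u + s)) (exprS u); rewrite exprS in un_le.
have := exprn_ge0 n u_ge0; move: IH un_le.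
rewrite -[n.+2]addn1 natrD -[n.+1]addn1 natrD; nra.
Qed.

Definition binom_rem u h n := (u + h) ^+ n - u ^+ n - n%:R * h * u ^+ n.-1.

Lemma binom_remS u h n :
  binom_rem u h n.+1 = (u + h) * binom_rem u h n + n%:R * h ^+ 2 * u ^+ n.-1.
Proof.
rewrite /binom_rem; case: n => [|n] /=; first by rewrite expr0 expr1 mul0r; ring.
by rewrite !exprS -[n.+2]addn1 -[n.+1]addn1 !natrD; ring.
Qed.

Lemma binom_rem_ge0 u s n : 0 <= u -> 0 <= s -> 0 <= binom_rem u s n.
Proof.
move=> u_ge0 s_ge0; elim: n => [|n IH]; first by rewrite /binom_rem !expr0 mul0r; lra.
rewrite binom_remS; apply: addr_ge0; first by apply: mulr_ge0 => //; lra.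
by rewrite mulr_ge0 ?exprn_ge0 // mulr_ge0 ?exprn_ge0.
Qed.

Lemma binom_rem_le u s n : 0 <= u -> 0 <= s -> binom_rem u s n <= (u + s) ^+ n.
Proof.
move=> u_ge0 s_ge0; rewrite /binom_rem.
have := exprn_ge0 n u_ge0.
have : 0 <= n%:R * s * u ^+ n.-1 by rewrite !mulr_ge0 ?exprn_ge0.
lra.
Qed.

(* Both remainders satisfy the recursion of binom_remS, whose inhomogeneous
   term is quadratic in the increment. *)
Lemma norm_binom_rem_le u h s n : 0 < s -> `|h| <= s ->
  `|binom_rem u h n| <= (h / s) ^+ 2 * binom_rem `|u| s n.
Proof.
move=> s_gt0 hs; elim: n => [|n IH].
  by rewrite /binom_rem !expr0 !mul0r !subr0 subrr normr0 mulr0.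
rewrite !binom_remS; apply: le_trans (ler_normD _ _) _.
have q_ge0 : 0 <= (h / s) ^+ 2 by rewrite exprn_even_ge0.
have rem_ge0 := binom_rem_ge0 n (normr_ge0 u) (ltW s_gt0).
have first_le : `|(u + h) * binom_rem u h n| <= (`|u| + s) * ((h / s) ^+ 2 * binom_rem `|u| s n).
  by rewrite normrM; apply: ler_pM => //; apply: le_trans (ler_normD _ _) _; lra.
have second_eq : `|n%:R * h ^+ 2 * u ^+ n.-1| = (h / s) ^+ 2 * (n%:R * s ^+ 2 * `|u| ^+ n.-1).
  rewrite !normrM normr_nat !normrX -normrM -expr2 ger0_norm ?sqr_ge0 // expr_div_n.
  by field; rewrite gt_eqF.
by rewrite second_eq; lra.
Qed.

Lemma norm_binom_rem_le_expr u h s n : 0 < s -> `|h| <= s ->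
  `|binom_rem u h n| <= (h / s) ^+ 2 * (`|u| + s) ^+ n.
Proof.
move=> s_gt0 hs; apply: le_trans (norm_binom_rem_le u n s_gt0 hs) _.
by rewrite ler_wpM2l ?exprn_even_ge0 // binom_rem_le // ltW.
Qed.

End BinomialRemainder.

Section Monomials.
Set Implicit Arguments. Unset Strict Implicit.
Variables (R : realType) (d : nat).
Local Notation mi := ('I_d -> nat).
Implicit Types (j : 'I_d) (a b : mi) (x y : 'rV[R]_d).

Lemma normr_coord_le x i : `|x 0 i| <= `|x|.
Proof.
change (`|x 0 i| <= mx_norm x); rewrite mx_normrE.
exact: (le_bigmax _ (fun ij : 'I_1 * 'I_d => `|x ij.1 ij.2|) (0, i)).
Qed.

Lemma normr_lt_coord x r : 0 < r -> (forall i, `|x 0 i| < r) -> `|x| < r.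
Proof.
move=> r_gt0 x_lt; change (mx_norm x < r); rewrite mx_normrE.
by apply/bigmax_ltP; split => // -[i0 i] _ /=; rewrite (ord1 i0).
Qed.

Lemma coord_shift x j h i :
  (h *: unitvec j + x) 0 i = if i == j then x 0 i + h else x 0 i.
Proof. by rewrite !mxE; case: eqP => _; rewrite ?mulr1 ?mulr0 ?add0r // addrC. Qed.

Definition monom_except j a x := \prod_(i | i != j) x 0 i ^+ a i.

Lemma monom_except_split j a x : monom a x = x 0 j ^+ a j * monom_except j a x.
Proof. by rewrite /monom (bigD1 j). Qed.

Lemma monom_except_incr j a x : monom_except j (incr_mi j a) x = monom_except j a x.
Proof. by apply: eq_bigr => i /negbTE ij; rewrite /incr_mi ij addn0. Qed.

Lemma normr_monom_except j a x :
  `|monom_except j a x| = \prod_(i | i != j) `|x 0 i| ^+ a i.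
Proof. by rewrite normr_prod; apply: eq_bigr => i _; rewrite normrX. Qed.

Lemma eq_monom_except j a x y : (forall i, i != j -> x 0 i = y 0 i) ->
  monom_except j a x = monom_except j a y.
Proof. by move=> xy; apply: eq_bigr => i /xy ->. Qed.

Definition abs_bump x j s : 'rV[R]_d :=
  \row_i (if i == j then `|x 0 i| + s else `|x 0 i|).

Lemma monom_abs_bump x j s b : monom b (abs_bump x j s) =
  (`|x 0 j| + s) ^+ b j * \prod_(i | i != j) `|x 0 i| ^+ b i.
Proof.
rewrite (monom_except_split j) mxE eqxx; congr (_ * _).
by apply: eq_bigr => i /negbTE ij; rewrite mxE ij.
Qed.

Lemma monom_abs_bump_ge0 x j s b : 0 <= s -> 0 <= monom b (abs_bump x j s).
Proof. by move=> s_ge0; rewrite monom_abs_bump mulr_ge0 ?exprn_ge0 ?addr_ge0 ?prodr_ge0. Qed.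

Lemma normr_abs_bump_lt x j s r : 0 <= s -> `|x| + s < r -> `|abs_bump x j s| < r.
Proof.
move=> s_ge0 xs_lt; apply: normr_lt_coord => [|i].
  by apply: le_lt_trans xs_lt; rewrite addr_ge0.
have := normr_coord_le x i; rewrite mxE => xi_le.
case: eqP => _; apply: le_lt_trans xs_lt; first by rewrite ger0_norm ?addr_ge0 // lerD2r.
by rewrite normr_id (le_trans xi_le) // lerDl.
Qed.

Definition deriv_coef j (c : mi -> R) : mi -> R :=
  fun a => (a j).+1%:R * c (incr_mi j a).

End Monomials.

Section TermwiseDerivative.
Set Implicit Arguments. Unset Strict Implicit.
Variable R : realType.

Lemma derive_quadratic_remainder (V : normedModType R) (f : V -> R)
    (v x : V) (L K s : R) : 0 < s ->
  (forall h, 0 < `|h| < s -> `|f (h *: v + x) - f x - h * L| <= K * `|h| ^+ 2) ->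
  'D_v f x = L.
Proof.
move=> s_gt0 rem_le; apply: cvg_lim => //; apply/cvgrPdist_le => eps eps_gt0.
have rad_gt0 : 0 < Num.min s (eps / (`|K| + 1)) by rewrite lt_min s_gt0 divr_gt0 ?ltr_wpDl.
near=> h.
have h_neq0 : h != 0 by near: h; exact: nbhs_dnbhs_neq.
have h_lt : `|h| < Num.min s (eps / (`|K| + 1)) by near: h; exact: dnbhs0_lt.
have h_gt0 : 0 < `|h| by rewrite normr_gt0.
move: h_lt; rewrite lt_min ltr_pdivlMr ?ltr_wpDl // => /andP[h_lt_s h_lt_eps].
have := rem_le h; rewrite h_gt0 h_lt_s => /(_ isT); rewrite /= /shift.
set D := f (h *: v + x) - f x => D_le.
have -> : L - h^-1 *: D = - (h^-1 * (D - h * L)) by rewrite /GRing.scale /=; field.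
rewrite normrN normrM normrV ?unitfE // ler_pdivrMl //.
apply: le_trans D_le _; have := ler_norm K; nra.
Unshelve. all: by end_near.
Qed.

Variable d : nat.
Local Notation mi := ('I_d -> nat).
Variables (f : 'rV[R]_d -> R) (c : mi -> R) (r : R) (j : 'I_d) (x : 'rV[R]_d) (s M : R).
Hypotheses (f_rep : power_series_rep f c r) (s_gt0 : 0 < s) (xs_lt : `|x| + s < r).
Let z := abs_bump x j s.
Hypothesis M_bound : forall N, box_abs_sum c z N <= M.

Let dterm b := (b j)%:R * c b * x 0 j ^+ (b j).-1 * monom_except j b x.

(* The extra room s in the j-th coordinate of z pays for the factor b j. *)
Lemma norm_dterm_le b : `|dterm b| <= s^-1 * `|c b * monom b z|.
Proof.
have z_ge0 := monom_abs_bump_ge0 x j b (ltW s_gt0).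
rewrite [X in _ <= _ * X]normrM (ger0_norm z_ge0) monom_abs_bump.
rewrite /dterm !normrM normr_nat normrX normr_monom_except.
set P := \prod_(i | i != j) _; set u := `|x 0 j|.
have P_ge0 : 0 <= P by rewrite prodr_ge0 // => i _; rewrite exprn_ge0.
have cP_ge0 : 0 <= `|c b| * P by rewrite mulr_ge0.
case: (b j) => [|n].
  by rewrite !mul0r expr0 mul1r mulr_ge0 // invr_ge0 ltW.
have lin_le : n.+1%:R * u ^+ n <= s^-1 * (u + s) ^+ n.+1.
  by rewrite ler_pdivlMl // mulrC exprD_ge_linear_term ?normr_ge0 ?ltW.
have -> : n.+1%:R * `|c b| * u ^+ n.+1.-1 * P = `|c b| * P * (n.+1%:R * u ^+ n) by ring.
have -> : s^-1 * (`|c b| * ((u + s) ^+ n.+1 * P)) = `|c b| * P * (s^-1 * (u + s) ^+ n.+1)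
  by ring.
by rewrite ler_wpM2l.
Qed.

Lemma boxsum_norm_dterm_le N : boxsum (fun b => `|dterm b|) N <= s^-1 * M.
Proof.
apply: le_trans (ler_boxsum N norm_dterm_le) _.
by rewrite boxsumZ; apply: ler_wpM2l; [rewrite invr_ge0 ltW|apply: M_bound].
Qed.

Lemma deriv_coef_termE a : deriv_coef j c a * monom a x = dterm (incr_mi j a).
Proof.
by rewrite /deriv_coef /dterm incr_mi_id monom_except_incr (monom_except_split j) /=; ring.
Qed.

Lemma deriv_series_abs_le N : box_abs_sum (deriv_coef j c) x N <= s^-1 * M.
Proof.
rewrite box_abs_sumE /boxsum; under eq_bigr do rewrite deriv_coef_termE.
apply: le_trans (ler_sum _ (fun a _ => norm_dterm_le _)) _.
rewrite -mulr_sumr ler_wpM2l ?invr_ge0 ?(ltW s_gt0) //.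
by apply: le_trans (M_bound N.+1); rewrite box_abs_sumE; apply: boxsum_incr_le => b.
Qed.

Let L := limn (boxsum dterm).

Lemma dterm_cvg : boxsum dterm @ \oo --> L.
Proof. exact: boxsum_abs_cvg boxsum_norm_dterm_le. Qed.

Lemma deriv_series_cvg : box_sum (deriv_coef j c) x @ \oo --> L.
Proof.
pose v N := boxsum (fun b => `|dterm b|) N.+1 - boxsum (fun b => `|dterm b|) N.
have v_cvg0 : v @ \oo --> 0.
  exact: boxsum_increment_cvg0 (fun b => normr_ge0 _) boxsum_norm_dterm_le.
have dist_le N : `|box_sum (deriv_coef j c) x N - boxsum dterm N| <= v N.
  rewrite box_sumE /boxsum; under eq_bigr do rewrite deriv_coef_termE.
  by apply: boxsum_incr_dist => b bj0; rewrite /dterm bj0 !mul0r.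
have dist_cvg0 : (fun N => box_sum (deriv_coef j c) x N - boxsum dterm N) @ \oo --> 0.
  apply: (@squeeze_cvgr _ _ _ _ (fun N => - v N) v); last exact: v_cvg0.
  - by near=> N; have := dist_le N; rewrite ler_norml.
  - by rewrite -oppr0; apply: cvgN.
rewrite -[L]add0r; have -> : box_sum (deriv_coef j c) x =
    (fun N => box_sum (deriv_coef j c) x N - boxsum dterm N) \+ boxsum dterm.
  by apply: funext => N /=; rewrite subrK.
by apply: cvgD dist_cvg0 dterm_cvg.
Unshelve. all: by end_near.
Qed.

Lemma norm_rem_term_le h b : `|h| <= s ->
  `|c b * monom_except j b x * binom_rem (x 0 j) h (b j)| <= (h / s) ^+ 2 * `|c b * monom b z|.
Proof.
move=> h_le; have z_ge0 := monom_abs_bump_ge0 x j b (ltW s_gt0).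
rewrite [X in _ <= _ * X]normrM (ger0_norm z_ge0) monom_abs_bump.
rewrite !normrM normr_monom_except.
set P := \prod_(i | i != j) _.
have P_ge0 : 0 <= P by rewrite prodr_ge0 // => i _; rewrite exprn_ge0.
have -> : (h / s) ^+ 2 * (`|c b| * ((`|x 0 j| + s) ^+ b j * P)) =
    `|c b| * P * ((h / s) ^+ 2 * (`|x 0 j| + s) ^+ b j) by ring.
by rewrite ler_wpM2l ?mulr_ge0 // norm_binom_rem_le_expr.
Qed.

Lemma increment_remainder_le h : 0 < `|h| < s ->
  `|f (h *: unitvec j + x) - f x - h * L| <= M / s ^+ 2 * `|h| ^+ 2.
Proof.
move=> /andP[_ h_lt_s]; set y := h *: unitvec j + x.
have y_lt : `|y| < r.
  apply: normr_lt_coord => [|i]; first by apply: le_lt_trans xs_lt; rewrite addr_ge0 // ltW.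
  rewrite coord_shift; have := normr_coord_le x i.
  case: eqP => _ xi_le; apply: le_lt_trans xs_lt.
    by apply: le_trans (ler_normD _ _) _; rewrite lerD // ltW.
  by apply: le_trans xi_le _; rewrite lerDl ltW.
pose E b := c b * monom_except j b x * binom_rem (x 0 j) h (b j).
have boxsumE N : box_sum c y N - box_sum c x N - h * boxsum dterm N = boxsum E N.
  rewrite !box_sumE -boxsumZ -!boxsumB; congr boxsum; apply: funext => b.
  rewrite /E /binom_rem /dterm (monom_except_split j b y) (monom_except_split j b x).
  rewrite coord_shift eqxx (@eq_monom_except _ _ j b y x); first by ring.
  by move=> i /negbTE ij; rewrite coord_shift ij.
have E_cvg : boxsum E @ \oo --> f y - f x - h * L.
  have x_lt : `|x| < r by apply: le_lt_trans xs_lt; rewrite lerDl ltW.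
  have [[_ fy] [_ fx]] := (f_rep.2 y y_lt, f_rep.2 x x_lt).
  rewrite -(funext boxsumE); apply: cvgB; [exact: cvgB|exact: cvgMr dterm_cvg].
apply: lim_norm_le E_cvg _ => N; apply: le_trans (ler_norm_boxsum _ _) _.
apply: le_trans (ler_boxsum N (fun b => norm_rem_term_le b (ltW h_lt_s))) _.
have -> : M / s ^+ 2 * `|h| ^+ 2 = (h / s) ^+ 2 * M.
  by rewrite expr_div_n -(real_normK (num_real h)); ring.
by rewrite boxsumZ ler_wpM2l ?exprn_even_ge0 //; apply: M_bound.
Qed.

End TermwiseDerivative.

Lemma dpartial_rep (R : realType) (d : nat) (f : 'rV[R]_d -> R) (c : ('I_d -> nat) -> R)
    (r r' : R) (j : 'I_d) :
  power_series_rep f c r -> 0 < r' -> r' < r ->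
  power_series_rep (dpartial j f) (deriv_coef j c) r'.
Proof.
move=> f_rep r'_gt0 r'_lt; split => // x x_lt.
pose s := (r - r') / 2.
have s_gt0 : 0 < s by rewrite divr_gt0 // subr_gt0.
have xs_lt : `|x| + s < r by rewrite /s; lra.
have [[M M_bound] _] := f_rep.2 _ (normr_abs_bump_lt j (ltW s_gt0) xs_lt).
split; first by exists (s^-1 * M); exact: deriv_series_abs_le.
have rem_le := increment_remainder_le f_rep s_gt0 xs_lt M_bound.
rewrite /dpartial (derive_quadratic_remainder s_gt0 rem_le).
exact: deriv_series_cvg s_gt0 M_bound.
Qed.

Section IteratedDerivatives.
Set Implicit Arguments. Unset Strict Implicit.
Variables (R : realType) (d : nat).
Local Notation mi := ('I_d -> nat).

Definition addmi (a g : mi) : mi := fun i => (a i + g i)%N.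

Lemma iter_incr_mi n j (g : mi) i : iter n (incr_mi j) g i = (g i + n * (i == j))%N.
Proof. by elim: n => [|n IH] /=; rewrite ?muln0 ?addn0 // /incr_mi IH mulSn; ring. Qed.

Lemma foldr_iter_incr_mi (beta : mi) :
  foldr (fun j g => iter (beta j) (incr_mi j) g) (fun=> 0%N) (enum 'I_d) = beta.
Proof.
apply: funext => i.
have -> : forall s, foldr (fun j g => iter (beta j) (incr_mi j) g) (fun=> 0%N) s i =
    (\sum_(j <- s) beta j * (i == j))%N.
  by elim=> [|j s IH]; rewrite ?big_nil // big_cons /= iter_incr_mi IH addnC.
rewrite big_enum /= (bigD1 i) //= eqxx muln1 big1 ?addn0 // => j /negbTE ji.
by rewrite eq_sym ji muln0.
Qed.

Variable c : mi -> R.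

Definition rep_in_shifted_support (g : 'rV[R]_d -> R) (gam : mi) : Prop :=
  exists (c' : mi -> R) (r : R), power_series_rep g c' r /\
    forall a, c' a <> 0 -> c (addmi a gam) <> 0.

Lemma dpartial_shifted_support j g gam : rep_in_shifted_support g gam ->
  rep_in_shifted_support (dpartial j g) (incr_mi j gam).
Proof.
move=> [c' [r [g_rep c'_supp]]]; have r_gt0 := g_rep.1.
exists (deriv_coef j c'), (r / 2); split; first by apply: dpartial_rep g_rep _ _; lra.
move=> a /eqP; rewrite mulf_eq0 negb_or => /andP[_ /eqP/c'_supp].
have -> // : addmi (incr_mi j a) gam = addmi a (incr_mi j gam).
by apply: funext => i; rewrite /addmi /incr_mi addnAC addnA.
Qed.

Lemma dmulti_shifted_support (S : 'rV[R]_d -> R) r (beta : mi) :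
  power_series_rep S c r -> rep_in_shifted_support (dmulti beta S) beta.
Proof.
move=> S_rep; rewrite -[X in rep_in_shifted_support _ X]foldr_iter_incr_mi /dmulti.
elim: (enum 'I_d) => [|j s IH] /=.
  exists c, r; split => // a; congr (c _ <> 0); apply: funext => i; by rewrite /addmi addn0.
by elim: (beta j) => //= n IHn; apply: dpartial_shifted_support.
Qed.

End IteratedDerivatives.

Section Dickson.
Set Implicit Arguments. Unset Strict Implicit.
Variable d : nat.
Local Notation mi := ('I_d -> nat).

Definition dickson_basis (A : set mi) (T : finType) (L : T -> mi) :=
  (forall t, A (L t)) /\ (forall a, A a -> exists t, forall i, (L t i <= a i)%N).

Definition has_dickson_basis (A : set mi) := exists (T : finType) (L : T -> mi), dickson_basis A L.

Lemma has_dickson_basis0 (A : set mi) : (forall a, ~ A a) -> has_dickson_basis A.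
Proof. by move=> A0; exists void, (@of_void _); split => [[]|a /A0]. Qed.

Lemma has_dickson_basis1 (A : set mi) v : (forall a, A a -> a = v) -> has_dickson_basis A.
Proof.
move=> Av; have [Avv|nAv] := pselect (A v).
  by exists unit, (fun=> v); split => // a /Av ->; exists tt.
by apply: has_dickson_basis0 => a Aa; rewrite -(Av a Aa) in nAv.
Qed.

Lemma has_dickson_basis_cover (A : set mi) a0 (K : finType) (B : K -> set mi) :
  A a0 -> (forall k, B k `<=` A) -> (forall k, has_dickson_basis (B k)) ->
  (forall a, A a -> (forall i, (a0 i <= a i)%N) \/ exists k, B k a) ->
  has_dickson_basis A.
Proof.
move=> Aa0 BA B_basis cover.
have /choice[F F_basis] k : exists TL : {T : finType & T -> mi}, dickson_basis (B k) (projT2 TL).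
  by have [T [L TL]] := B_basis k; exists (existT _ T L).
exists (option {k : K & projT1 (F k)}).
exists (fun o => if o is Some (existT k t) then projT2 (F k) t else a0); split.
  by case=> [[k t]|] //=; apply: BA; apply: (F_basis k).1.
move=> a /cover[a0_le|[k Bka]]; first by exists None.
by have [t Lt] := (F_basis k).2 a Bka; exists (Some (existT _ k t)).
Qed.

(* Induction on the number of free coordinates: below a fixed a0 in A, each
   piece {a in A | a i = t} (t < a0 i) has one free coordinate less. *)
Lemma has_dickson_basis_free n (F : {set 'I_d}) (A : set mi) (v : mi) : #|F| = n ->
  (forall a, A a -> forall i, i \notin F -> a i = v i) -> has_dickson_basis A.
Proof.
elim: n F A v => [|n IH] F A v F_card A_fixed.
  apply: (@has_dickson_basis1 _ v) => a Aa; apply: funext => i.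
  by apply: A_fixed; rewrite // (cards0_eq F_card) inE.
have [[a0 Aa0]|A0] := pselect (exists a, A a); last first.
  by apply: has_dickson_basis0 => a Aa; apply: A0; exists a.
pose B (k : {i : 'I_d & 'I_(a0 i)}) a := A a /\ projT1 k \in F /\ a (projT1 k) = projT2 k.
apply: (@has_dickson_basis_cover _ _ _ B Aa0) => [k a [] //|[i t]|a Aa].
  have [iF|iF] := boolP (i \in F); last first.
    by apply: has_dickson_basis0 => a [_ [/= iF']]; rewrite iF' in iF.
  apply: (IH (F :\ i) _ (fun l => if l == i then val t else v l)).
    by move: F_card; rewrite (cardsD1 i) iF add1n => -[].
  move=> a [Aa [_ ai]] l; rewrite !inE negb_and negbK.
  by case: eqP => [->|_] //= /(A_fixed _ Aa).
have [a0_le|/forallPn[i]] := boolP [forall i, (a0 i <= a i)%N].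
  by left => i; move/forallP: a0_le.
rewrite -ltnNge => ai_lt; right.
have iF : i \in F.
  apply/negPn/negP => iF; move: ai_lt.
  by rewrite (A_fixed _ Aa i iF) (A_fixed _ Aa0 i iF) ltnn.
by exists (existT _ i (Ordinal ai_lt)).
Qed.

Lemma dickson (A : set mi) : has_dickson_basis A.
Proof.
apply: (@has_dickson_basis_free _ [set: 'I_d] A (fun=> 0%N)) => // a _ i.
by rewrite inE.
Qed.

End Dickson.

Section MonomialBounds.
Set Implicit Arguments. Unset Strict Implicit.
Variable R : realType.

Lemma expr_le_powR_shift (u rho : R) (m n l : nat) : 0 < u -> u <= rho -> (l <= m + n)%N ->
  u ^+ m <= rho ^+ m * (rho `^ (n%:R - l%:R) * u `^ (l%:R - n%:R)).
Proof.
move=> u_gt0 u_le; have rho_gt0 := lt_le_trans u_gt0 u_le.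
move=> l_le; rewrite -!powR_mulrn ?(ltW u_gt0) ?(ltW rho_gt0) //.
have m_split : m%:R = (l%:R - n%:R) + (m + n - l)%N%:R :> R by rewrite natrB // natrD; ring.
rewrite {1}m_split powRD; last by rewrite (gt_eqF u_gt0) implybT.
rewrite mulrA -[X in _ <= X * _]powRD; last by rewrite (gt_eqF rho_gt0) implybT.
have -> : m%:R + (n%:R - l%:R) = (m + n - l)%N%:R :> R by rewrite natrB // natrD; ring.
rewrite [leLHS]mulrC; apply: ler_wpM2r; first exact: powR_ge0.
by apply: ge0_ler_powR; rewrite ?nnegrE ?ler0n ?(ltW u_gt0) ?(ltW rho_gt0).
Qed.

Variable d : nat.
Local Notation mi := ('I_d -> nat).

Lemma normr_monom_le (x : 'rV[R]_d) (rho : R) (a beta l : mi) :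
  (forall j, x 0 j != 0) -> (forall j, `|x 0 j| <= rho) -> (forall j, (l j <= a j + beta j)%N) ->
  `|monom a x| <= monom a (const_mx rho : 'rV[R]_d) *
     (\prod_j rho `^ ((beta j)%:R - (l j)%:R) * abs_monomR x (fun j => (l j)%:R - (beta j)%:R)).
Proof.
move=> x_neq0 x_le l_le; rewrite /monom /abs_monomR normr_prod -!big_split /=.
apply: ler_prod => j _; rewrite normrX exprn_ge0 ?normr_ge0 //= mxE.
by apply: expr_le_powR_shift; rewrite ?normr_gt0.
Qed.

Lemma normr_rep_le (f : 'rV[R]_d -> R) (c : mi -> R) r x z B M :
  power_series_rep f c r -> `|x| < r -> (forall N, box_abs_sum c z N <= M) -> 0 <= B ->
  (forall a, c a <> 0 -> `|monom a x| <= B * `|monom a z|) ->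
  `|f x| <= B * M.
Proof.
move=> [_ f_rep] x_lt M_bound B_ge0 term_le; have [_ f_cvg] := f_rep x x_lt.
apply: lim_norm_le f_cvg _ => N; rewrite box_sumE; apply: le_trans (ler_norm_boxsum _ _) _.
apply: le_trans _ (ler_wpM2l B_ge0 (M_bound N)); rewrite box_abs_sumE -boxsumZ.
apply: ler_boxsum => a; have [->|ca] := eqVneq (c a) 0; first by rewrite !mul0r normr0 mulr0.
by rewrite !normrM mulrCA ler_wpM2l // term_le //; apply/eqP.
Qed.

Lemma rep_le_sum_abs_monomR (g : 'rV[R]_d -> R) (c : mi -> R) r (beta : mi)
    (T : finType) (L : T -> mi) :
  power_series_rep g c r ->
  (forall a, c a <> 0 -> exists t, forall j, (L t j <= a j + beta j)%N) ->
  exists rho M, [/\ 0 < rho, 0 <= M & forall x : 'rV[R]_d, `|x| < rho -> (forall j, x 0 j != 0) ->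
    `|g x| <= M * \sum_t abs_monomR x (fun j => (L t j)%:R - (beta j)%:R)].
Proof.
move=> g_rep dom; have r_gt0 := g_rep.1.
pose rho := r / 2; have rho_gt0 : 0 < rho by rewrite divr_gt0.
pose z : 'rV[R]_d := const_mx rho.
have z_lt : `|z| < r by apply: normr_lt_coord => // j; rewrite mxE gtr0_norm /rho //; lra.
have [[M M_bound] _] := g_rep.2 z z_lt.
have M_ge0 : 0 <= M by apply: le_trans (M_bound 0%N); apply: sumr_ge0 => a _.
pose k t := \prod_j rho `^ ((beta j)%:R - (L t j)%:R).
have k_ge0 t : 0 <= k t by apply: prodr_ge0 => j _; apply: powR_ge0.
exists rho, ((\sum_t k t) * M); split => //; first by apply: mulr_ge0 => //; apply: sumr_ge0.
move=> x x_lt x_neq0; pose w t := abs_monomR x (fun j => (L t j)%:R - (beta j)%:R).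
have w_ge0 t : 0 <= w t by apply: prodr_ge0 => j _; apply: powR_ge0.
have x_le j : `|x 0 j| <= rho by apply: ltW; apply: le_lt_trans (normr_coord_le x j) x_lt.
rewrite mulrAC; apply: (normr_rep_le g_rep _ M_bound) => [||a /dom[t L_le]].
- by apply: lt_trans x_lt _; rewrite /rho; lra.
- by apply: mulr_ge0; apply: sumr_ge0 => t _; [exact: k_ge0|exact: w_ge0].
apply: le_trans (normr_monom_le x_neq0 x_le L_le) _.
have z_ge0 : 0 <= monom a z by apply: prodr_ge0 => j _; rewrite mxE exprn_ge0 ?ltW.
have le_sum (F : T -> R) : (forall t, 0 <= F t) -> F t <= \sum_t F t.
  by move=> F_ge0; rewrite (bigD1 t) //= lerDl; apply: sumr_ge0 => u _.
rewrite (ger0_norm z_ge0) mulrC; apply: ler_wpM2r => //.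
by apply: ler_pM; [exact: k_ge0|exact: w_ge0|exact: le_sum k k_ge0|exact: le_sum w w_ge0].
Qed.

End MonomialBounds.

Section EstimateHelpers.
Set Implicit Arguments. Unset Strict Implicit.

Lemma sub_convex_hull_fun (R : realType) (d : nat) (A : set ('I_d -> R)) :
  A `<=` convex_hull_fun A.
Proof.
move=> q Aq; exists 1%N, (fun=> 1), (fun=> q).
by split=> //; split; [rewrite big_ord1|split=> // j; rewrite big_ord1 mul1r].
Qed.

Lemma newton_polyhedron_supp (R : realType) (d : nat) (c : ('I_d -> nat) -> R) alpha :
  c alpha <> 0 -> newton_polyhedron c (fun j => (alpha j)%:R).
Proof. by move=> c_alpha; apply: sub_convex_hull_fun; exists alpha. Qed.

Lemma sum_le_card_ereal_sup (R : realType) (T : finType) (w : T -> R) (E : set (\bar R)) :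
  (forall t, E (w t)%:E) -> ((\sum_t w t)%:E <= #|T|%:R%:E * ereal_sup E)%E.
Proof.
move=> wE; rewrite mule_natl -sumEFin.
have -> : (ereal_sup E *+ #|T| = \sum_(t : T) ereal_sup E)%E by rewrite sumr_const.
by apply: lee_sum => t _; apply: ereal_sup_ubound.
Qed.

End EstimateHelpers.

Theorem corollary2p3 (R : realType) (d k : nat) (S : 'rV[R]_d -> R)
  (c : ('I_d -> nat) -> R) (r : R) (beta : 'I_k -> ('I_d -> nat)) :
  power_series_rep S c r ->
  exists C : R, exists delta : R, 0 < delta /\
    forall x : 'rV[R]_d, `|x| < delta -> (forall j, x 0 j != 0) ->
    forall i : 'I_k,
      ((`| dmulti (beta i) S x |)%:E <=
        C%:E * ereal_sup [set (abs_monomR x (fun j => alpha j - ((beta i j)%:R)))%:E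
                          | alpha in newton_polyhedron c])%E.
Proof.
move=> S_rep; have [T [L [L_supp L_dom]]] := dickson [set a | c a <> 0].
have /choice[rhoM rhoM_spec] i : exists rhoM : R * R, [/\ 0 < rhoM.1, 0 <= rhoM.2 &
    forall x : 'rV[R]_d, `|x| < rhoM.1 -> (forall j, x 0 j != 0) -> `|dmulti (beta i) S x|
      <= rhoM.2 * \sum_t abs_monomR x (fun j => (L t j)%:R - (beta i j)%:R)].
  have [c' [r' [rep supp]]] := dmulti_shifted_support (beta i) S_rep.
  have [rho [M [? ? ?]]] := rep_le_sum_abs_monomR rep (fun a ca => L_dom _ (supp a ca)).
  by exists (rho, M).
pose M := \sum_i (rhoM i).2; have M_ge0 : 0 <= M by apply: sumr_ge0 => i _; case: (rhoM_spec i).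
exists (M * #|T|%:R), (\big[Num.min/1]_i (rhoM i).1); split.
  by apply: lt_bigmin => // i _; case: (rhoM_spec i).
move=> x x_lt x_neq0 i; have [_ Mi_ge0 g_le] := rhoM_spec i.
have W_in t : [set (abs_monomR x (fun j => alpha j - (beta i j)%:R))%:E
    | alpha in newton_polyhedron c] (abs_monomR x (fun j => (L t j)%:R - (beta i j)%:R))%:E.
  by exists (fun j => (L t j)%:R); first exact: newton_polyhedron_supp (L_supp t).
rewrite EFinM -muleA; apply: le_trans _ (lee_wpmul2l _ (sum_le_card_ereal_sup W_in)); last first.
  by rewrite lee_fin.
rewrite -EFinM lee_fin; apply: le_trans (g_le x (lt_le_trans x_lt (bigmin_le _ _ _)) x_neq0) _.
rewrite ler_wpM2r ?sumr_ge0 // => [t _|]; first by apply: prodr_ge0 => j _; apply: powR_ge0.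
by rewrite /M (bigD1 i) //= lerDl; apply: sumr_ge0 => l _; case: (rhoM_spec l).
Qed.
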